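(* Let $(G,N,\theta)_{\mathcal H}\ge_c(H,M,\varphi)_{\mathcal H}$. Suppose that $L\trianglelefteq G$ is contained in $\ker\theta\cap\ker\varphi\cap\mathbf C_G(N)$ and that $\mathbf C_{G/L}(N/L)=\mathbf C_G(N)/L$. Then $(G/L,N/L,\theta)_{\mathcal H}\ge_c(H/L,M/L,\varphi)_{\mathcal H}$, where $\theta$ and $\varphi$ are regarded as characters of $N/L$ and $M/L$.
   Context: All groups are finite; $p$ is a fixed prime. $\mathbb Q^{\mathrm{ab}}\subseteq\mathbb C$ is generated by all roots of unity, $\mathcal G=\mathrm{Gal}(\mathbb Q^{\mathrm{ab}}/\mathbb Q)$, $\mathcal H\le\mathcal G$ consists of those $\sigma$ for which there is an integer $f$ with $\sigma(\xi)=\xi^{p^f}$ for all roots of unity $\xi$ of order prime to $p$. For $N\trianglelefteq G$, $\theta\in\mathrm{Irr}(N)$, $g\in G$, $\sigma\in\mathcal G$: $\theta^{g\sigma}(n)=\sigma(\theta(gng^{-1}))$; $A_\theta$ the stabilizer in $A\le G\times\mathcal G$; $\theta^{\mathcal H}$ the $\mathcal H$-orbit; $G_{\theta^{\mathcal H}}=\{g:\theta^g\in\theta^{\mathcal H}\}$. $(G,N,\theta)_{\mathcal H}$ is an $\mathcal H$-triple if $N\trianglelefteq G$, $\theta\in\mathrm{Irr}(N)$, $G_{\theta^{\mathcal H}}=G$. Projective representation $\mathcal P$ with factor set $\alpha$: $\mathcal P(x)\mathcal P(y)=\alpha(x,y)\mathcal P(xy)$. For $G$-invariant $\theta$, $\mathcal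 P$ is associated with $\theta$ if $\mathcal P_N$ affords $\theta$ and $\mathcal P(ng)=\mathcal P(n)\mathcal P(g)$, $\mathcal P(gn)=\mathcal P(g)\mathcal P(n)$. $\mathcal Q\sim\mu\mathcal P$ means $\mathcal Q(x)=\mu(x)M^{-1}\mathcal P(x)M$ for fixed invertible $M$. For $\mathcal P$ associated with $\theta$ on $G_\theta$ with entries in $\mathbb Q^{\mathrm{ab}}$ and $\theta^{x\sigma}=\theta$: $\mathcal P^{x\sigma}(y)=\sigma(\mathcal P(xyx^{-1}))$, and $\mu_{x\sigma}$ is the unique function $G_\theta\to\mathbb C^\times$, constant on $N$-cosets, $\mu_{x\sigma}(1)=1$, with $\mathcal P^{x\sigma}\sim\mu_{x\sigma}\mathcal P$. $(G,N,\theta)_{\mathcal H}\ge_c(H,M,\varphi)_{\mathcal H}$ (both $\mathcal H$-triples, $H\le G$) means: (i) $G=NH$, $N\cap H=M$, $\mathbf C_G(N)\subseteq H$; (ii) $(H\times\mathcal H)_\theta=(H\times\mathcal H)_\varphi$; (iii) there are projective representations $\mathcal P$ of $G_\theta$ associated with $\theta$ and $\mathcal P'$ of $H_\varphi$ associated with $\varphi$, entries in $\mathbb Q^{\mathrm{ab}}$, factor sets with root-of-unity values agreeing on $H_\theta\times H_\theta$, and $\mathcal P(c),\mathcal P'(c)$ the same scalar for all $c\in\mathbf C_G(N)$; (iv) $\mu_a=\mu'_a$ on $H_\theta$ for all $a\in(H\times\mathcal H)_\theta$. *)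

From HB Require Import structures.
From mathcomp Require Import all_boot all_order all_algebra all_fingroup all_solvable all_field all_character.
Unset Implicit Arguments. Unset Printing Implicit Defensive.
Import GRing.Theory Num.Theory.
Local Open Scope ring_scope.

(* Galois automorphisms sigma of Q^ab are represented by (any extension to)
   field automorphisms of algC, i.e. {rmorphism algC -> algC}; all
   conditions below only depend on the restriction to Q^ab. *)

Definition in_Qab (z : algC) : Prop :=
  exists (n : nat) (e : algC) (q : {poly rat}),
    n.-primitive_root e /\ z = (map_poly ratr q).[e].

Definition root_of_unity (z : algC) : Prop :=
  exists2 k : nat, (0 < k)%N & z ^+ k = 1.

(* sigma in calH: there is an integer f with sigma(xi) = xi^(p^f) for all
   roots of unity xi of order prime to p; f < 0 is encoded as
   sigma(xi)^(p^|f|) = xi. *)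
Definition in_calH (p : nat) (s : {rmorphism algC -> algC}) : Prop :=
  exists f : nat,
    (forall (n : nat) (xi : algC), (0 < n)%N -> coprime n p -> xi ^+ n = 1 ->
        s xi = xi ^+ (p ^ f)) \/
    (forall (n : nat) (xi : algC), (0 < n)%N -> coprime n p -> xi ^+ n = 1 ->
        (s xi) ^+ (p ^ f) = xi).

Section Triples.
Context {gT : finGroupType}.

Definition cfAct {N : {group gT}} (th : 'CF(N)) (g : gT)
    (s : {rmorphism algC -> algC}) : 'CF(N) :=
  cfAut s (th ^ g)%CF.

Definition Htriple (p : nat) (G N : {group gT}) (th : 'CF(N)) : Prop :=
  [/\ (N <| G)%g, th \in irr N &
      forall g, g \in G -> exists2 s, in_calH p s & (th ^ g)%CF = cfAut s th].

Definition proj_rep {n : nat} (K : {set gT}) (P : gT -> 'M[algC]_n)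
    (alpha : gT -> gT -> algC) : Prop :=
  (forall x, x \in K -> P x \in unitmx) /\
  (forall x y, x \in K -> y \in K -> P x *m P y = alpha x y *: P (x * y)%g).

Definition assoc_with {n : nat} (K : {set gT}) {N : {group gT}} (th : 'CF(N))
    (P : gT -> 'M[algC]_n) : Prop :=
  [/\ (forall x y, x \in N -> y \in N -> P (x * y)%g = P x *m P y),
      (forall x, x \in N -> \tr (P x) = th x),
      (forall x y, x \in N -> y \in K -> P (x * y)%g = P x *m P y) &
      (forall x y, x \in K -> y \in N -> P (x * y)%g = P x *m P y)].

Definition entries_Qab {n : nat} (K : {set gT}) (P : gT -> 'M[algC]_n) : Prop :=
  forall x, x \in K -> forall i j, in_Qab (P x i j).

Definition projAct {n : nat} (P : gT -> 'M[algC]_n) (x : gT)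
    (s : {rmorphism algC -> algC}) : gT -> 'M[algC]_n :=
  fun y => map_mx s (P (x * y * x^-1)%g).

Definition is_mu {n : nat} (K N : {set gT}) (P : gT -> 'M[algC]_n) (x : gT)
    (s : {rmorphism algC -> algC}) (mu : gT -> algC) : Prop :=
  [/\ mu 1%g = 1,
      (forall y, y \in K -> mu y != 0),
      (forall y z, y \in K -> z \in K -> (N :* y = N :* z)%g -> mu y = mu z) &
      exists2 M : 'M[algC]_n, M \in unitmx &
        forall y, y \in K -> projAct P x s y = mu y *: (invmx M *m P y *m M)].

Definition ge_c (p : nat) (G N : {group gT}) (th : 'CF(N))
    (H M : {group gT}) (ph : 'CF(M)) : Prop :=
  [/\ Htriple p G N th, Htriple p H M ph & H \subset G] /\
  [/\
      [/\ (N * H)%g = G, N :&: H = M & ('C_G(N))%g \subset H],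

      (forall x s, x \in H -> in_calH p s ->
         (cfAct th x s = th <-> cfAct ph x s = ph)) &
      exists (n m : nat) (P : gT -> 'M[algC]_n) (P' : gT -> 'M[algC]_m)
             (alpha alpha' : gT -> gT -> algC),
      [/\ [/\ proj_rep ('I_G[th])%g P alpha, assoc_with ('I_G[th])%g th P,
              entries_Qab ('I_G[th])%g P &
              forall x y, x \in ('I_G[th])%g -> y \in ('I_G[th])%g -> root_of_unity (alpha x y)],
          [/\ proj_rep ('I_H[ph])%g P' alpha', assoc_with ('I_H[ph])%g ph P',
              entries_Qab ('I_H[ph])%g P' &
              forall x y, x \in ('I_H[ph])%g -> y \in ('I_H[ph])%g -> root_of_unity (alpha' x y)],
          (forall x y, x \in ('I_H[th])%g -> y \in ('I_H[th])%g -> alpha x y = alpha' x y),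
          (forall c, c \in ('C_G(N))%g -> exists lam : algC, P c = lam%:M /\ P' c = lam%:M) &
          (forall x s, x \in H -> in_calH p s -> cfAct th x s = th ->
             forall mu mu' : gT -> algC,
               is_mu ('I_G[th])%g N P x s mu -> is_mu ('I_H[ph])%g M P' x s mu' ->
               {in ('I_H[th])%g, mu =1 mu'})]].

End Triples.

From Pilot Require Import Defs.
From mathcomp Require Import all_boot all_order all_algebra all_fingroup all_solvable all_field all_character.
Local Open Scope group_scope.
Import GRing.Theory.

(* A projective representation P associated with th is an ordinary representation
   on N affording th, hence trivial on L <= ker th; being multiplicative on
   N-cosets, it is then constant on L-cosets, so it descends to the inertia group
   in G / L through coset representatives, with the same factor set and entries.
   Conjugation by (x, sigma), inertia groups and centralizers commute with the
   passage to G / L, and a mu-function of the quotient triple composed with the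
   projection G -> G / L is a mu-function of the original triple, so conditions
   (i)-(iv) all descend. *)

Section QuotientRepr.
Context {gT : finGroupType}.
Implicit Types K L N : {group gT}.

Lemma mem_repr_quotient {K L} {a : coset_of L} : L <| K -> a \in K / L -> repr a \in K.
Proof.
move=> nsLK Ka; rewrite -(quotientGK nsLK).
by apply: mem_morphpre; [exact: repr_coset_norm | rewrite /= coset_reprK].
Qed.

Lemma coset_reprM L (a b : coset_of L) : coset L (repr a * repr b) = a * b.
Proof. by rewrite morphM ?repr_coset_norm //; congr (_ * _); apply: coset_reprK. Qed.

Lemma quotient_rcoset N L y :
  N \subset 'N(L) -> y \in 'N(L) -> (N :* y) / L = N / L :* coset L y.
Proof. by move=> nLN nLy; rewrite quotientMl ?quotient_set1. Qed.

End QuotientRepr.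

Section InertiaQuotient.
Context {gT : finGroupType}.
Implicit Types G H L N : {group gT}.

Lemma inertia_cfAut N (s : {rmorphism algC -> algC}) (phi : 'CF(N)) :
  'I[cfAut s phi] = 'I[phi].
Proof.
by apply/setP=> y; rewrite !inE -cfAutConjg (inj_eq (cfAut_inj s)).
Qed.

Lemma Inertia_quoS {G H N L} {th : 'CF(N)} :
  N <| G -> L <| G -> L \subset cfker th -> L \subset H -> H \subset G ->
  'I_(H / L)[th / L] = 'I_H[th] / L.
Proof.
move=> nsNG nsLG kerL sLH sHG.
have ->: 'I_(H / L)[th / L] = H / L :&: 'I_(G / L)[th / L].
  by rewrite setIA (setIidPl (quotientS L sHG)).
by rewrite inertia_quo // -quotientGI // setIA (setIidPl sHG).
Qed.

Lemma normal_cfker {G N L} {th : 'CF(N)} :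
  N <| G -> L <| G -> L \subset cfker th -> L <| N.
Proof.
by move=> nsNG nsLG kerL; rewrite (normalS _ (normal_sub nsNG) nsLG) // (subset_trans kerL) ?cfker_sub.
Qed.

Lemma normal_ker_Inertia {G H N L} {th : 'CF(N)} :
  L <| G -> H \subset G -> L \subset H -> L \subset cfker th -> L <| 'I_H[th].
Proof.
move=> nsLG sHG sLH kerL; apply: normalS (normalS sLH sHG nsLG); last exact: Inertia_sub.
by rewrite subsetI sLH (subset_trans kerL) // (subset_trans (cfker_sub th)) ?sub_inertia.
Qed.

Lemma cfAct_quo {G N L} {th : 'CF(N)} {y} s :
  N <| G -> L <| G -> L \subset cfker th -> y \in G ->
  cfAct (th / L)%CF (coset L y) s = (th / L)%CF <-> cfAct th y s = th.
Proof.
move=> nsNG nsLG kerL Gy; rewrite /cfAct (cfConjgQuo _ nsNG nsLG Gy) cfAutQuo.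
have nsLN := normal_cfker nsNG nsLG kerL.
have nLy : y \in 'N(L) := subsetP (normal_norm nsLG) y Gy.
have kerLy : L \subset cfker (cfAut s (th ^ y)).
  by rewrite cfker_aut cfker_conjg ?(subsetP (normal_norm nsNG)) // -(normP nLy) conjSg.
split=> [e | -> //].
by rewrite -(cfQuoK nsLN kerLy) e cfQuoK.
Qed.

Lemma cfAct_norm_Inertia {G N} {th : 'CF(N)} {x} s :
  N <| G -> x \in G -> cfAct th x s = th -> x \in 'N('I_G[th]).
Proof.
move=> nsNG Gx thx; apply/normP.
rewrite conjIg conjGid // conjg_inertia ?(subsetP (normal_norm nsNG)) //.
by rewrite -(inertia_cfAut _ s) -/(cfAct th x s) thx.
Qed.

Lemma Htriple_quo p G N L (th : 'CF(N)) :
  Htriple p G N th -> L <| G -> L \subset cfker th ->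
  Htriple p (G / L)%G (N / L)%G (th / L)%CF.
Proof.
move=> [nsNG irr_th conj_th] nsLG kerL.
have nsLN := normal_cfker nsNG nsLG kerL.
split; [exact: quotient_normal | by rewrite cfQuo_irr |].
move=> _ /morphimP[x _ Gx ->]; have [s Hs thx] := conj_th x Gx.
by exists s => //; rewrite (cfConjgQuo _ nsNG nsLG Gx) thx cfAutQuo.
Qed.

End InertiaQuotient.

Definition qab_assoc_proj_rep {gT : finGroupType} {n : nat} (K : {set gT})
    {N : {group gT}} (th : 'CF(N)) (P : gT -> 'M[algC]_n) (al : gT -> gT -> algC) :=
  [/\ proj_rep K P al, assoc_with K th P, entries_Qab K P &
      forall x y, x \in K -> y \in K -> Defs.root_of_unity (al x y)].

Section QuotientProjRep.
Context {gT : finGroupType} {n : nat} {K N L : {group gT}}.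
Context {th : 'CF(N)} {P : gT -> 'M[algC]_n} {al : gT -> gT -> algC}.
Hypotheses (sNK : N \subset K) (nsLK : L <| K) (kerL : L \subset cfker th).
Hypotheses (prP : proj_rep K P al) (asP : assoc_with K th P).

Local Notation Pq := (fun a : coset_of L => P (repr a)).
Local Notation alq := (fun a b : coset_of L => al (repr a) (repr b)).

Let sLN : L \subset N := subset_trans kerL (cfker_sub th).
Let nsLN : L <| N := normalS sLN sNK nsLK.

Lemma assoc_with_1 : P 1 = (1%:M)%R.
Proof.
have [[unitP _] [mulP _ _ _]] := (prP, asP).
apply: (can_inj (mulKmx (unitP 1 (group1 K)))).
by rewrite -mulP ?mulg1 ?mulmx1.
Qed.

(* On N, P is an ordinary representation affording th. *)
Lemma assoc_with_cfker : {in cfker th, forall l, P l = (1%:M)%R}.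
Proof.
have [mulP trP _ _] := asP.
pose rN := MxRepresentation (conj assoc_with_1 mulP : mx_repr N P).
have ->: th = cfRepr rN.
  apply/cfunP=> x; rewrite cfunE.
  by case: (boolP (x \in N)) => Nx; [rewrite mulr1n trP | rewrite mulr0n cfun0].
by move=> l; rewrite cfker_repr => /rkerP[].
Qed.

Lemma assoc_with_repr_coset : {in K, forall k, P (repr (coset L k)) = P k}.
Proof.
move=> k Kk; have nLk : k \in 'N(L) := subsetP (normal_norm nsLK) k Kk.
have := mem_repr_coset (coset L k); rewrite val_coset // => /rcosetP[l Ll ->].
have [_ _ mulNK _] := asP.
by rewrite mulNK ?(subsetP sLN) // assoc_with_cfker ?mul1mx ?(subsetP kerL).
Qed.

Lemma assoc_with_reprM :
  {in K / L &, forall a b : coset_of L, P (repr (a * b)) = P (repr a * repr b)}.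
Proof.
move=> a b Ka Kb.
by rewrite -coset_reprM assoc_with_repr_coset // groupM // (mem_repr_quotient nsLK).
Qed.

Lemma proj_rep_quo : proj_rep (K / L) Pq alq.
Proof.
have [unitP mulP] := prP.
split=> [a Ka | a b Ka Kb]; first by rewrite unitP ?(mem_repr_quotient nsLK).
by rewrite assoc_with_reprM // mulP ?(mem_repr_quotient nsLK).
Qed.

Lemma assoc_with_quo : assoc_with (K / L) (th / L)%CF Pq.
Proof.
have [mulN trP mulNK mulKN] := asP.
have sNKq : N / L \subset K / L := quotientS L sNK.
have reprN a : a \in N / L -> repr a \in N := mem_repr_quotient nsLN.
have reprK a : a \in K / L -> repr a \in K := mem_repr_quotient nsLK.
split=> [a b Na Nb | a Na | a b Na Kb | a b Ka Nb].
- by rewrite assoc_with_reprM ?(subsetP sNKq) // mulN ?reprN.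
- by rewrite trP ?reprN // -{2}(coset_reprK a) cfQuoE ?reprN.
- by rewrite assoc_with_reprM ?(subsetP sNKq a Na) // mulNK ?reprN ?reprK.
- by rewrite assoc_with_reprM ?(subsetP sNKq b Nb) // mulKN ?reprN ?reprK.
Qed.

Lemma qab_assoc_proj_rep_quo :
  entries_Qab K P -> {in K &, forall x y, Defs.root_of_unity (al x y)} ->
  qab_assoc_proj_rep (K / L) (th / L)%CF Pq alq.
Proof.
move=> qabP rootP; split; [exact: proj_rep_quo | exact: assoc_with_quo | |].
- by move=> a Ka; apply: qabP; rewrite (mem_repr_quotient nsLK).
- by move=> a b Ka Kb; apply: rootP; rewrite (mem_repr_quotient nsLK).
Qed.

Lemma is_mu_quo_lift {x s} {mu : coset_of L -> algC} :
  x \in 'N(L) -> x \in 'N(K) ->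
  is_mu (K / L) (N / L) Pq (coset L x) s mu ->
  is_mu K N P x s (fun y => mu (coset L y)).
Proof.
move=> nLx nKx [mu1 mu_neq0 mu_coset [M unitM PqxE]].
have nLK := normal_norm nsLK.
have nLN : N \subset 'N(L) := subset_trans sNK nLK.
split=> [| y Ky | y z Ky Kz Nyz |]; first by rewrite morph1.
- exact/mu_neq0/mem_quotient.
- apply: mu_coset; rewrite ?mem_quotient // -!quotient_rcoset ?(subsetP nLK) //.
  by rewrite Nyz.
exists M => // y Ky; have nLy := subsetP nLK y Ky.
have Kyx : x * y * x^-1 \in K by rewrite (conjgCV x y) mulgK memJ_norm ?groupV.
have := PqxE _ (mem_quotient L Ky).
by rewrite /projAct -morphV // -!morphM ?groupM ?groupV // !assoc_with_repr_coset.
Qed.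

End QuotientProjRep.

Section GeCQuotient.
Context {gT : finGroupType} {G N H M L : {group gT}} {th : 'CF(N)} {ph : 'CF(M)}.
Hypotheses (nsNG : N <| G) (nsMH : M <| H) (sHG : H \subset G) (nsLG : L <| G).
Hypotheses (kerLth : L \subset cfker th) (kerLph : L \subset cfker ph).

Let sLN : L \subset N := subset_trans kerLth (cfker_sub th).
Let sLH : L \subset H :=
  subset_trans (subset_trans kerLph (cfker_sub ph)) (normal_sub nsMH).
Let nsLH : L <| H := normalS sLH sHG nsLG.
Let nsL_IG : L <| 'I_G[th] := normal_ker_Inertia nsLG (subxx G) (normal_sub nsLG) kerLth.
Let nsL_IH : L <| 'I_H[ph] := normal_ker_Inertia nsLH (subxx H) sLH kerLph.
Let nsL_IHth : L <| 'I_H[th] := normal_ker_Inertia nsLG sHG sLH kerLth.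
Let sNIG : N \subset 'I_G[th] := sub_Inertia th (normal_sub nsNG).
Let sMIH : M \subset 'I_H[ph] := sub_Inertia ph (normal_sub nsMH).

Lemma ge_c_quo_i :
  N * H = G -> N :&: H = M -> 'C_G(N) \subset H -> 'C_(G / L)(N / L) = 'C_G(N) / L ->
  [/\ N / L * (H / L) = G / L, N / L :&: H / L = M / L & 'C_(G / L)(N / L) \subset H / L].
Proof.
move=> defG defM sCH ->; split; last exact: quotientS.
  by rewrite -quotientMl ?defG // (subset_trans (normal_sub nsNG) (normal_norm nsLG)).
by rewrite -quotientGI ?defM.
Qed.

Lemma ge_c_quo_ii {p} :
  (forall x s, x \in H -> in_calH p s -> (cfAct th x s = th <-> cfAct ph x s = ph)) ->
  forall x s, x \in H / L -> in_calH p s ->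
    (cfAct (th / L)%CF x s = (th / L)%CF <-> cfAct (ph / L)%CF x s = (ph / L)%CF).
Proof.
move=> actH _ s /morphimP[y _ Hy ->] Hs.
apply: iff_trans (cfAct_quo s nsNG nsLG kerLth (subsetP sHG y Hy)) _.
exact: iff_trans (actH y s Hy Hs) (iff_sym (cfAct_quo s nsMH nsLH kerLph Hy)).
Qed.

Lemma ge_c_quo_iii {n m} {P : gT -> 'M[algC]_n} {P' : gT -> 'M[algC]_m} {al al'} :
  L \subset 'C_G(N) -> 'C_(G / L)(N / L) = 'C_G(N) / L ->
  qab_assoc_proj_rep 'I_G[th] th P al -> qab_assoc_proj_rep 'I_H[ph] ph P' al' ->
  {in 'I_H[th] &, al =2 al'} ->
  (forall c, c \in 'C_G(N) -> exists lam, P c = lam%:M%R /\ P' c = lam%:M%R) ->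
  [/\ qab_assoc_proj_rep 'I_(G / L)[th / L] (th / L)%CF (fun a => P (repr a))
        (fun a b => al (repr a) (repr b)),
      qab_assoc_proj_rep 'I_(H / L)[ph / L] (ph / L)%CF (fun a => P' (repr a))
        (fun a b => al' (repr a) (repr b)),
      {in 'I_(H / L)[th / L] &,
        forall a b : coset_of L, al (repr a) (repr b) = al' (repr a) (repr b)} &
      forall c : coset_of L, c \in 'C_(G / L)(N / L) ->
        exists lam, P (repr c) = lam%:M%R /\ P' (repr c) = lam%:M%R].
Proof.
move=> sLC eqC [prP asP qabP rootP] [prP' asP' qabP' rootP'] eq_al scalC.
rewrite (inertia_quo nsNG nsLG kerLth) (inertia_quo nsMH nsLH kerLph).
rewrite (Inertia_quoS nsNG nsLG kerLth sLH sHG) eqC.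
have nsLC : L <| 'C_G(N) := normalS sLC (subsetIl _ _) nsLG.
split.
- exact: qab_assoc_proj_rep_quo sNIG nsL_IG kerLth prP asP qabP rootP.
- exact: qab_assoc_proj_rep_quo sMIH nsL_IH kerLph prP' asP' qabP' rootP'.
- by move=> a b /(mem_repr_quotient nsL_IHth) Ia /(mem_repr_quotient nsL_IHth); apply: eq_al.
- by move=> c /(mem_repr_quotient nsLC); apply: scalC.
Qed.

Lemma ge_c_quo_iv {p n m} {P : gT -> 'M[algC]_n} {P' : gT -> 'M[algC]_m} {al al'} :
  proj_rep 'I_G[th] P al -> assoc_with 'I_G[th] th P ->
  proj_rep 'I_H[ph] P' al' -> assoc_with 'I_H[ph] ph P' ->
  (forall x s, x \in H -> in_calH p s -> cfAct th x s = th -> cfAct ph x s = ph) ->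
  (forall x s, x \in H -> in_calH p s -> cfAct th x s = th ->
     forall mu mu', is_mu 'I_G[th] N P x s mu -> is_mu 'I_H[ph] M P' x s mu' ->
     {in 'I_H[th], mu =1 mu'}) ->
  forall x s, x \in H / L -> in_calH p s -> cfAct (th / L)%CF x s = (th / L)%CF ->
  forall mu mu',
    is_mu 'I_(G / L)[th / L] (N / L) (fun a => P (repr a)) x s mu ->
    is_mu 'I_(H / L)[ph / L] (M / L) (fun a => P' (repr a)) x s mu' ->
  {in 'I_(H / L)[th / L], mu =1 mu'}.
Proof.
move=> prP asP prP' asP' actH muH _ s /morphimP[x nLx Hx ->] Hs.
rewrite (inertia_quo nsNG nsLG kerLth) (inertia_quo nsMH nsLH kerLph).
rewrite (Inertia_quoS nsNG nsLG kerLth sLH sHG).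
have Gx := subsetP sHG x Hx.
move=> /(cfAct_quo s nsNG nsLG kerLth Gx) thx; have phx := actH x s Hx Hs thx.
have nIGx := cfAct_norm_Inertia s nsNG Gx thx.
have nIHx := cfAct_norm_Inertia s nsMH Hx phx.
move=> mu mu' /(is_mu_quo_lift sNIG nsL_IG kerLth prP asP nLx nIGx) muG.
move=> /(is_mu_quo_lift sMIH nsL_IH kerLph prP' asP' nLx nIHx) muH'.
move=> a /(mem_repr_quotient nsL_IHth) Ia.
by rewrite -(coset_reprK a); apply: muH Hx Hs thx _ _ muG muH' _ Ia.
Qed.

End GeCQuotient.

Theorem lemma2p4 (p : nat) (gT : finGroupType) (G N H M L : {group gT})
    (th : 'CF(N)) (ph : 'CF(M)) :
  prime p ->
  ge_c p G N th H M ph ->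
  L <| G ->
  L \subset cfker th :&: cfker ph :&: 'C_G(N) ->
  'C_(G / L)(N / L) = 'C_G(N) / L ->
  ge_c p (G / L)%G (N / L)%G (th / L)%CF (H / L)%G (M / L)%G (ph / L)%CF.
Proof.
move=> _ [[trG trH sHG] [[defG defM sCH] actH
  [n [m [P [P' [al [al' [PG PH eq_al scalC muH]]]]]]]]].
move=> nsLG /subsetIP[/subsetIP[kerLth kerLph] sLC] eqC.
have [[nsNG _ _] [nsMH _ _]] := (trG, trH).
have sLH := subset_trans (subset_trans kerLph (cfker_sub ph)) (normal_sub nsMH).
split.
  split; [exact: Htriple_quo | | exact: quotientS].
  exact: Htriple_quo trH (normalS sLH sHG nsLG) kerLph.
split; first exact: ge_c_quo_i nsNG nsLG kerLth defG defM sCH eqC.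
  exact (ge_c_quo_ii nsNG nsMH sHG nsLG kerLth kerLph actH).
exists n, m, (fun a : coset_of L => P (repr a)), (fun a : coset_of L => P' (repr a)).
exists (fun a b : coset_of L => al (repr a) (repr b)).
exists (fun a b : coset_of L => al' (repr a) (repr b)).
have [PGq PHq eq_alq scalCq] :=
  ge_c_quo_iii nsNG nsMH sHG nsLG kerLth kerLph sLC eqC PG PH eq_al scalC.
have thph x s Hx Hs := (actH x s Hx Hs).1.
have [[prP asP _ _] [prP' asP' _ _]] := (PG, PH).
split=> //; exact (ge_c_quo_iv nsNG nsMH sHG nsLG kerLth kerLph prP asP prP' asP' thph muH).
Qed.
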